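(* Let $\alpha\ge0$, $\mu\ge0$. There is a positive constant $M$, independent of $n$, such that for all $g\in C_B[0,\infty)$, $n\in\mathbb{N}$ and $x\in[0,\infty)$, $$|T_n(g;x)-g(x)|\le 2M\left\{\min\!\left(1,\frac{\chi_n(x)}{2}\right)\|g\|_{C_B[0,\infty)}+\omega_2\!\left(g;\sqrt{\frac{\chi_n(x)}{2}}\right)\right\},$$ where $\chi_n(x)=\Delta_1+\Delta_2$ with $\Delta_1=\dfrac{2\alpha x^2}{n}$ and $\Delta_2=\dfrac{1}{n^2}x\left(4x^3\alpha^2+4\alpha x+n\right)+\dfrac{2\mu x}{n}\dfrac{e_\mu(-nx)}{e_\mu(nx)}$.
   Context: $C_B[0,\infty)$ denotes the space of uniformly continuous bounded functions on $[0,\infty)$ with sup norm. The second order modulus of continuity is $\omega_2(f;\delta)=\sup_{0<s\le\delta}\|f(\cdot+2s)-2f(\cdot+s)+f(\cdot)\|_{C_B[0,\infty)}$. For $\mu>-\tfrac12$ define $\gamma_\mu(2k)=\dfrac{2^{2k}k!\,\Gamma(k+\mu+1/2)}{\Gamma(\mu+1/2)}$ and $\gamma_\mu(2k+1)=\dfrac{2^{2k+1}k!\,\Gamma(k+\mu+3/2)}{\Gamma(\mu+1/2)}$, $k\ge0$; $e_\mu(x)=\sum_{k\ge0} x^k/\gamma_\mu(k)$; $\theta_k=0$ if $k$ is even and $\theta_k=1$ if $k$ is odd. Let $h_k^\mu(\xi,\alpha)=\gamma_\mu(k)\sum_{j=0}^{\lfloor k/2\rfloor}\dfrac{\alpha^j\xi^{k-2j}}{j!\,\gamma_\mu(k-2j)}$.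 For $\alpha\ge0,\mu\ge0$, $n\in\mathbb{N}$ and $x\in[0,\infty)$ define $$T_n(f;x)=\frac{1}{e^{\alpha x^2}e_\mu(nx)}\sum_{k=0}^\infty \frac{h_k^\mu(n,\alpha)}{\gamma_\mu(k)}x^k f\!\left(\frac{k+2\mu\theta_k}{n}\right).$$ *)

From Stdlib Require Import Reals Lra.
From Coquelicot Require Import Coquelicot.
Open Scope R_scope.

Fixpoint poch (a : R) (k : nat) : R :=
  match k with
  | O => 1
  | S k' => poch a k' * (a + INR k')
  end.

(* gamma_mu(2q)   = 2^(2q)   q! Gamma(q+mu+1/2)/Gamma(mu+1/2) = 2^(2q) q! (mu+1/2)_q
   gamma_mu(2q+1) = 2^(2q+1) q! Gamma(q+mu+3/2)/Gamma(mu+1/2) = 2^(2q+1) q! (mu+1/2)_(q+1) *)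
Definition gamma_mu (mu : R) (k : nat) : R :=
  let q := Nat.div2 k in
  if Nat.even k then 2 ^ k * INR (Factorial.fact q) * poch (mu + /2) q
  else 2 ^ k * INR (Factorial.fact q) * poch (mu + /2) (S q).

Definition e_mu (mu x : R) : R := Series (fun k => x ^ k / gamma_mu mu k).

Definition theta (k : nat) : R := if Nat.even k then 0 else 1.

Definition h_mu (mu : R) (k : nat) (xi alpha : R) : R :=
  gamma_mu mu k *
  sum_f_R0 (fun j => alpha ^ j * xi ^ (k - 2 * j) /
                     (INR (Factorial.fact j) * gamma_mu mu (k - 2 * j))) (Nat.div2 k).

Definition T_op (alpha mu : R) (n : nat) (f : R -> R) (x : R) : R :=
  / (exp (alpha * x ^ 2) * e_mu mu (INR n * x)) *
  Series (fun k => h_mu mu k (INR n) alpha / gamma_mu mu k * x ^ k *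
                   f ((INR k + 2 * mu * theta k) / INR n)).

Definition CB (g : R -> R) : Prop :=
  (exists B, forall x, 0 <= x -> Rabs (g x) <= B) /\
  (forall eps, 0 < eps -> exists delta, 0 < delta /\
     forall x y, 0 <= x -> 0 <= y -> Rabs (x - y) < delta ->
       Rabs (g x - g y) < eps).

Definition supnorm (g : R -> R) : R :=
  real (Lub_Rbar (fun y => exists x, 0 <= x /\ y = Rabs (g x))).

(* second order modulus of continuity; for delta <= 0 the set is empty and the
   value is real m_infty = 0 *)
Definition omega2 (g : R -> R) (delta : R) : R :=
  real (Lub_Rbar (fun y => exists s t, 0 < s /\ s <= delta /\ 0 <= t /\
          y = Rabs (g (t + 2 * s) - 2 * g (t + s) + g t))).

Definition chi (alpha mu : R) (n : nat) (x : R) : R :=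
  let nn := INR n in
  2 * alpha * x ^ 2 / nn +
  (/ nn ^ 2 * x * (4 * x ^ 3 * alpha ^ 2 + 4 * alpha * x + nn) +
   2 * mu * x / nn * (e_mu mu (- (nn * x)) / e_mu mu (nn * x))).

From Stdlib Require Import Reals Lra Lia Classical.
From Coquelicot Require Import Coquelicot.
Open Scope R_scope.

(* The coefficients [c_k = h_k^mu(n, alpha) / gamma_mu(k)] of [T_n] are the Cauchy
   product of the Taylor coefficients of [exp (alpha z^2)] and of [e_mu (n z)], so that
   [sum_k c_k z^k = exp (alpha z^2) e_mu (n z)], and they satisfy the three-term
   recurrence [s_(k+2) c_(k+2) = n c_(k+1) + 2 alpha c_k], where [s_k = k + 2 mu theta_k]
   and the nodes of [T_n] are [s_k / n].  Summing the recurrence, and the recurrence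
   multiplied by [s_k], against [x^k] gives the central moments of [T_n]: the first is
   [2 alpha x^2 / n], the second is [chi_n(x) - 2 alpha x^2 / n]; [e_mu (- n x)] enters
   because [s_(k+1) - s_k - 1 = 2 mu (-1)^k].

   So [T_n g x] is a positive average [sum_k u_k g(t_k) / sum_k u_k] with known moments.
   If [chi_n(x) / 2 >= 1] the trivial bound [2 ||g||] suffices.  Otherwise put
   [delta^2 = chi_n(x) / 2] and compare [g] with the line through [(x, g x)] of slope
   [D = (g (x + delta) - g x) / delta]: chaining second differences of step at most
   [delta] gives [|g t - g x - (t - x) D| <= 14 (1 + (t - x)^2 / delta^2) omega_2(g, delta)]
   and [|D| <= 2 ||g|| + 2 omega_2(g, delta) / delta^2]; averaging against the weights
   and using the two moments yields the estimate with [M = 30]. *)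

(** * Series of reals *)

Lemma is_series_scal_R c (a : nat -> R) (l : R) :
  is_series a l -> is_series (fun k => c * a k) (c * l).
Proof. exact (is_series_scal_l c a l). Qed.

Lemma is_series_plus_R (a b : nat -> R) (la lb : R) : is_series a la -> is_series b lb ->
  is_series (fun k => a k + b k) (la + lb).
Proof. exact (is_series_plus a b la lb). Qed.

Lemma is_series_eq (a b : nat -> R) (l l' : R) :
  is_series a l -> (forall k, a k = b k) -> l = l' -> is_series b l'.
Proof. intros H Hab <-. exact (is_series_ext a b l Hab H). Qed.

Lemma is_series_le (a b : nat -> R) (la lb : R) :
  is_series a la -> is_series b lb -> (forall k, a k <= b k) -> la <= lb.
Proof.
  intros Ha Hb H. apply (is_lim_seq_le (sum_n a) (sum_n b) la lb); [|exact Ha|exact Hb].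
  intros N. rewrite !sum_n_Reals. now apply sum_growing.
Qed.

Lemma is_series_Rabs_le (a b : nat -> R) (la lb : R) :
  is_series a la -> is_series b lb -> (forall k, Rabs (a k) <= b k) -> Rabs la <= lb.
Proof.
  intros Ha Hb H. apply Rabs_le. split.
  - replace (- lb) with (-1 * lb) by ring.
    apply (is_series_le _ a _ _ (is_series_scal_R (-1) _ _ Hb) Ha).
    intros k. specialize (H k). apply Rabs_le_between in H. lra.
  - apply (is_series_le a b _ _ Ha Hb). intros k. specialize (H k). apply Rabs_le_between in H. lra.
Qed.

Lemma is_series_term_le (a : nat -> R) (l : R) :
  is_series a l -> (forall k, 0 <= a k) -> forall k, a k <= l.
Proof.
  intros Ha H k. apply Rle_trans with (sum_f_R0 a k).
  - destruct k as [|k]; simpl; [lra|]. pose proof (cond_pos_sum a k H). lra.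
  - rewrite <- sum_n_Reals. apply (is_lim_seq_incr_compare (sum_n a) l Ha).
    intros N. rewrite !sum_n_Reals. simpl. specialize (H (S N)). lra.
Qed.

Definition shift (a : nat -> R) (k : nat) : R := match k with O => 0 | S k' => a k' end.

Lemma is_series_shift (a : nat -> R) (l : R) : is_series a l -> is_series (shift a) l.
Proof.
  intros H. apply is_series_decr_1. simpl.
  change (is_series a (l + - 0)). now rewrite Ropp_0, Rplus_0_r.
Qed.

(** * The coefficients of [T_n] *)

Definition node (mu : R) (k : nat) : R := INR k + 2 * mu * theta k.

Lemma nat_parity k : exists q, k = (2 * q)%nat \/ k = S (2 * q).
Proof. destruct (Nat.Even_or_Odd k) as [[q H]|[q H]]; exists q; lia. Qed.

Lemma even_double_S q : Nat.even (S (2 * q)) = false.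
Proof. rewrite <- Nat.add_1_r. apply Nat.even_odd. Qed.

Lemma theta_double q : theta (2 * q) = 0.
Proof. unfold theta. now rewrite Nat.even_even. Qed.

Lemma theta_double_S q : theta (S (2 * q)) = 1.
Proof. unfold theta. now rewrite even_double_S. Qed.

Lemma theta_bounds k : 0 <= theta k <= 1.
Proof. unfold theta; destruct (Nat.even k); lra. Qed.

Lemma node_0 mu : node mu 0 = 0.
Proof. unfold node, theta; simpl; ring. Qed.

Lemma node_S mu k : node mu (S k) = node mu k + 1 + 2 * mu * (-1) ^ k.
Proof.
  unfold node. rewrite S_INR.
  destruct (nat_parity k) as [q [-> | ->]].
  - rewrite theta_double, theta_double_S, pow_1_even. ring.
  - replace (S (S (2 * q))) with (2 * S q)%nat by lia.
    rewrite theta_double, theta_double_S, pow_1_odd. ring.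
Qed.

Lemma node_SS mu k : node mu (S (S k)) = node mu k + 2.
Proof. unfold node. rewrite !S_INR. change (theta (S (S k))) with (theta k). ring. Qed.

Lemma node_add_double mu m j : node mu (m + 2 * j) = node mu m + 2 * INR j.
Proof.
  induction j as [|j IH]; [rewrite Nat.add_0_r; simpl; ring|].
  replace (m + 2 * S j)%nat with (S (S (m + 2 * j))) by lia.
  rewrite node_SS, IH, S_INR. ring.
Qed.

Lemma INR_le_node mu k : 0 <= mu -> INR k <= node mu k.
Proof. intros. unfold node. pose proof (theta_bounds k). nra. Qed.

Lemma gamma_mu_0 mu : gamma_mu mu 0 = 1.
Proof. unfold gamma_mu; simpl. ring. Qed.

Lemma gamma_mu_double mu q :
  gamma_mu mu (2 * q) = 2 ^ (2 * q) * INR (Factorial.fact q) * poch (mu + /2) q.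
Proof. unfold gamma_mu; cbv zeta. now rewrite Nat.even_even, Nat.div2_double. Qed.

Lemma gamma_mu_double_S mu q :
  gamma_mu mu (S (2 * q)) = 2 ^ S (2 * q) * INR (Factorial.fact q) * poch (mu + /2) (S q).
Proof. unfold gamma_mu; cbv zeta. now rewrite even_double_S, Nat.div2_succ_double. Qed.

Lemma gamma_mu_S mu k : gamma_mu mu (S k) = gamma_mu mu k * node mu (S k).
Proof.
  unfold node. destruct (nat_parity k) as [q [-> | ->]].
  - rewrite gamma_mu_double_S, gamma_mu_double, theta_double_S, S_INR, mult_INR.
    simpl poch; simpl pow; simpl INR. field.
  - replace (S (S (2 * q))) with (2 * S q)%nat by lia.
    rewrite gamma_mu_double_S, gamma_mu_double, theta_double.
    replace (2 * S q)%nat with (S (S (2 * q))) by lia.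
    change (Factorial.fact (S q)) with (S q * Factorial.fact q)%nat.
    simpl poch; simpl pow. rewrite !mult_INR, !S_INR, mult_INR. simpl INR. field.
Qed.

Lemma fact_le_gamma_mu mu k : 0 <= mu -> INR (Factorial.fact k) <= gamma_mu mu k.
Proof.
  intros Hmu. induction k as [|k IH]; [rewrite gamma_mu_0; simpl; lra|].
  rewrite gamma_mu_S. change (Factorial.fact (S k)) with (S k * Factorial.fact k)%nat.
  rewrite mult_INR. pose proof (INR_le_node mu (S k) Hmu).
  pose proof (pos_INR (S k)). pose proof (pos_INR (Factorial.fact k)). nra.
Qed.

Lemma INR_fact_pos j : 0 < INR (Factorial.fact j).
Proof. apply lt_0_INR, Factorial.lt_O_fact. Qed.

Lemma gamma_mu_pos mu k : 0 <= mu -> 0 < gamma_mu mu k.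
Proof. intros. eapply Rlt_le_trans; [apply INR_fact_pos | now apply fact_le_gamma_mu]. Qed.

Definition exp_coef (alpha : R) (j : nat) : R := alpha ^ j / INR (Factorial.fact j).
Definition emu_coef (mu nn : R) (m : nat) : R := nn ^ m / gamma_mu mu m.
Definition coef (alpha mu nn : R) (k : nat) : R := h_mu mu k nn alpha / gamma_mu mu k.

Section Coefficients.
Variables alpha mu nn : R.
Hypothesis Hmu : 0 <= mu.

Lemma exp_coef_S j : INR (S j) * exp_coef alpha (S j) = alpha * exp_coef alpha j.
Proof.
  unfold exp_coef. change (Factorial.fact (S j)) with (S j * Factorial.fact j)%nat.
  pose proof (INR_fact_pos j). pose proof (lt_0_INR (S j) (Nat.lt_0_succ j)).
  rewrite mult_INR. simpl pow. field. lra.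
Qed.

Lemma emu_coef_S m : node mu (S m) * emu_coef mu nn (S m) = nn * emu_coef mu nn m.
Proof.
  unfold emu_coef. rewrite gamma_mu_S. simpl pow.
  pose proof (gamma_mu_pos mu m Hmu). pose proof (INR_le_node mu (S m) Hmu).
  pose proof (lt_0_INR (S m) (Nat.lt_0_succ m)). field. lra.
Qed.

Lemma coef_expand k :
  coef alpha mu nn k =
  sum_f_R0 (fun j => exp_coef alpha j * emu_coef mu nn (k - 2 * j)) (Nat.div2 k).
Proof.
  unfold coef, h_mu. pose proof (gamma_mu_pos mu k Hmu).
  rewrite Rmult_comm, <- Rmult_div_assoc, Rdiv_diag, Rmult_1_r by lra.
  apply sum_eq. intros j _. unfold exp_coef, emu_coef.
  pose proof (gamma_mu_pos mu (k - 2 * j) Hmu). pose proof (INR_fact_pos j). field. lra.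
Qed.

Lemma coef_0 : coef alpha mu nn 0 = 1.
Proof. rewrite coef_expand. unfold exp_coef, emu_coef. simpl. rewrite gamma_mu_0. field. Qed.

Lemma coef_nonneg k : 0 <= alpha -> 0 <= nn -> 0 <= coef alpha mu nn k.
Proof.
  intros Ha Hn. rewrite coef_expand. apply cond_pos_sum. intros j.
  pose proof (INR_fact_pos j). pose proof (gamma_mu_pos mu (k - 2 * j) Hmu).
  unfold exp_coef, emu_coef. apply Rmult_le_pos; apply Rdiv_le_0_compat; auto using pow_le.
Qed.

(* In the truncated convolution [conv K N], [node K = node (K - 2 j) + 2 j] splits
   [node K * conv K N] into a part where [emu_coef_S] lowers [K] by one and a part
   where [exp_coef_S] lowers it by two. *)
Let conv K N := sum_f_R0 (fun j => exp_coef alpha j * emu_coef mu nn (K - 2 * j)) N.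

Lemma coef_conv k : coef alpha mu nn k = conv k (Nat.div2 k).
Proof. apply coef_expand. Qed.

Lemma node_conv K N : (2 * N <= K)%nat ->
  node mu K * conv K N =
  sum_f_R0 (fun j => exp_coef alpha j * (node mu (K - 2 * j) * emu_coef mu nn (K - 2 * j))) N +
  2 * sum_f_R0 (fun j => INR j * exp_coef alpha j * emu_coef mu nn (K - 2 * j)) N.
Proof.
  intros HN. unfold conv. rewrite !scal_sum, <- sum_plus. apply sum_eq. intros j Hj.
  replace (node mu K) with (node mu (K - 2 * j + 2 * j)) by (f_equal; lia).
  rewrite node_add_double. ring.
Qed.

Lemma node_conv_emu_part K N : (2 * N < K)%nat ->
  sum_f_R0 (fun j => exp_coef alpha j * (node mu (K - 2 * j) * emu_coef mu nn (K - 2 * j))) N =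
  nn * conv (K - 1) N.
Proof.
  intros HN. unfold conv. rewrite scal_sum. apply sum_eq. intros j Hj.
  replace (K - 2 * j)%nat with (S (K - 1 - 2 * j)) by lia.
  rewrite emu_coef_S. ring.
Qed.

Lemma node_conv_exp_part K N :
  sum_f_R0 (fun j => INR j * exp_coef alpha j * emu_coef mu nn (K - 2 * j)) (S N) =
  alpha * conv (K - 2) N.
Proof.
  unfold conv. rewrite decomp_sum by lia. simpl pred. simpl INR at 1.
  rewrite !Rmult_0_l, Rplus_0_l, scal_sum. apply sum_eq. intros i _.
  replace (K - 2 * S i)%nat with (K - 2 - 2 * i)%nat by lia.
  rewrite Rmult_assoc, <- (Rmult_assoc (INR (S i))), exp_coef_S. ring.
Qed.

Lemma coef_rec_1 : node mu 1 * coef alpha mu nn 1 = nn * coef alpha mu nn 0.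
Proof.
  rewrite !coef_expand. simpl.
  transitivity (exp_coef alpha 0 * (node mu 1 * emu_coef mu nn 1)); [ring|].
  rewrite emu_coef_S. ring.
Qed.

Lemma coef_rec k :
  node mu (S (S k)) * coef alpha mu nn (S (S k)) =
  nn * coef alpha mu nn (S k) + 2 * alpha * coef alpha mu nn k.
Proof.
  rewrite !coef_conv.
  destruct (nat_parity k) as [q [-> | ->]].
  - replace (S (S (2 * q))) with (2 * S q)%nat by lia.
    rewrite Nat.div2_double, Nat.div2_succ_double, Nat.div2_double, node_conv by lia.
    rewrite tech5, node_conv_exp_part. replace (2 * S q - 2 * S q)%nat with 0%nat by lia.
    rewrite node_0, node_conv_emu_part by lia.
    replace (2 * S q - 1)%nat with (S (2 * q)) by lia.
    replace (2 * S q - 2)%nat with (2 * q)%nat by lia. ring.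
  - replace (S (S (S (2 * q)))) with (S (2 * S q)) by lia.
    replace (S (S (2 * q))) with (2 * S q)%nat by lia.
    rewrite Nat.div2_double, !Nat.div2_succ_double, node_conv by lia.
    rewrite node_conv_exp_part, node_conv_emu_part by lia.
    replace (S (2 * S q) - 1)%nat with (2 * S q)%nat by lia.
    replace (S (2 * S q) - 2)%nat with (S (2 * q)) by lia. ring.
Qed.

End Coefficients.

Lemma is_pseries_R (a : nat -> R) z l :
  is_pseries a z l <-> is_series (fun k => a k * z ^ k) l.
Proof.
  split; intros H; refine (is_series_ext _ _ _ _ H); intros k.
  - rewrite pow_n_pow. apply Rmult_comm.
  - rewrite <- pow_n_pow. apply Rmult_comm.
Qed.

Lemma is_series_parity (a : nat -> R) z l0 l1 :
  is_series (fun q => a (2 * q + 0)%nat * (z ^ 2) ^ q) l0 ->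
  is_series (fun q => a (2 * q + 1)%nat * (z ^ 2) ^ q) l1 ->
  is_series (fun k => a k * z ^ k) (l0 + z * l1).
Proof.
  intros H0 H1. apply is_pseries_R, is_pseries_odd_even; apply is_pseries_R; [|exact H1].
  refine (is_series_ext _ _ _ _ H0). intros q. now rewrite Nat.add_0_r.
Qed.

Lemma exp_coef_series alpha y :
  is_series (fun j => exp_coef alpha j * y ^ j) (exp (alpha * y)).
Proof.
  apply is_series_ext with (2 := proj1 (is_pseries_R _ _ _) (is_exp_Reals (alpha * y))).
  intros j. unfold exp_coef. rewrite Rpow_mult_distr. simpl.
  field. apply not_0_INR, Factorial.fact_neq_0.
Qed.

Section GeneratingFunction.
Variables alpha mu nn : R.
Hypotheses (Hmu : 0 <= mu) (Hnn : 0 <= nn).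

Lemma emu_coef_nonneg m : 0 <= emu_coef mu nn m.
Proof.
  unfold emu_coef. pose proof (gamma_mu_pos mu m Hmu).
  apply Rdiv_le_0_compat; auto using pow_le.
Qed.

(* [gamma_mu (2 i + r) >= (2 i + r)! >= i!] bounds each parity part by an exponential series. *)
Lemma ex_series_emu_coef_parity r y : 0 <= y ->
  ex_series (fun i => emu_coef mu nn (2 * i + r) * y ^ i).
Proof.
  intros Hy.
  apply (@ex_series_le R_AbsRing R_CompleteNormedModule _
           (fun i => exp_coef (nn ^ 2 * y) i * nn ^ r)).
  - intros i.
    change (Rabs (emu_coef mu nn (2 * i + r) * y ^ i) <= exp_coef (nn ^ 2 * y) i * nn ^ r).
    pose proof (emu_coef_nonneg (2 * i + r)).
    rewrite Rabs_pos_eq by (apply Rmult_le_pos; auto using pow_le).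
    unfold emu_coef, exp_coef.
    pose proof (gamma_mu_pos mu (2 * i + r) Hmu). pose proof (INR_fact_pos i).
    assert (INR (Factorial.fact i) <= gamma_mu mu (2 * i + r)).
    { apply Rle_trans with (INR (Factorial.fact (2 * i + r))).
      - apply le_INR, Factorial.fact_le. lia.
      - now apply fact_le_gamma_mu. }
    set (A := nn ^ r * (nn ^ 2) ^ i * y ^ i).
    assert (0 <= A) by (unfold A; repeat apply Rmult_le_pos; auto using pow_le, pow2_ge_0).
    replace (nn ^ (2 * i + r) / gamma_mu mu (2 * i + r) * y ^ i)
      with (A * / gamma_mu mu (2 * i + r)) by (unfold A; rewrite pow_add, pow_mult; field; lra).
    replace ((nn ^ 2 * y) ^ i / INR (Factorial.fact i) * nn ^ r)
      with (A * / INR (Factorial.fact i)) by (unfold A; rewrite Rpow_mult_distr; field; lra).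
    apply Rmult_le_compat_l; [auto|]. apply Rinv_le_contravar; lra.
  - eexists. apply is_series_scal_r.
    apply is_series_ext with (2 := exp_coef_series (nn ^ 2 * y) 1).
    intros i. rewrite pow1. apply Rmult_1_r.
Qed.

Hypothesis Halpha : 0 <= alpha.

Lemma coef_parity_series r y : (r <= 1)%nat -> 0 <= y ->
  is_series (fun q => coef alpha mu nn (2 * q + r) * y ^ q)
    (exp (alpha * y) * Series (fun i => emu_coef mu nn (2 * i + r) * y ^ i)).
Proof.
  intros Hr Hy.
  assert (Hexp_nonneg : forall j, 0 <= exp_coef alpha j * y ^ j).
  { intros j. pose proof (INR_fact_pos j). unfold exp_coef.
    apply Rmult_le_pos; [apply Rdiv_le_0_compat|]; auto using pow_le. }
  refine (is_series_ext _ _ _ _ (is_series_mult_pos _ _ _ _ (exp_coef_series alpha y)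
    (Series_correct _ (ex_series_emu_coef_parity r y Hy)) Hexp_nonneg _)).
  2:{ intros i. apply Rmult_le_pos; auto using emu_coef_nonneg, pow_le. }
  intros q. rewrite coef_expand by exact Hmu.
  replace (Nat.div2 (2 * q + r)) with q.
  2:{ destruct r as [|[|r]]; [rewrite Nat.add_0_r, Nat.div2_double; auto| |lia].
      rewrite Nat.add_1_r, Nat.div2_succ_double; auto. }
  rewrite (Rmult_comm _ (y ^ q)), scal_sum. apply sum_eq. intros j Hj.
  replace (2 * (q - j) + r)%nat with (2 * q + r - 2 * j)%nat by lia.
  replace (y ^ q) with (y ^ j * y ^ (q - j)) by (rewrite <- pow_add; f_equal; lia). ring.
Qed.

Lemma coef_series z :
  is_series (fun k => coef alpha mu nn k * z ^ k) (exp (alpha * z ^ 2) * e_mu mu (nn * z)).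
Proof.
  pose proof (pow2_ge_0 z) as Hz2.
  set (l r := Series (fun i => emu_coef mu nn (2 * i + r) * (z ^ 2) ^ i)).
  assert (Hl : forall r, is_series (fun i => emu_coef mu nn (2 * i + r) * (z ^ 2) ^ i) (l r)).
  { intros r. apply Series_correct, ex_series_emu_coef_parity, Hz2. }
  assert (He : e_mu mu (nn * z) = l 0%nat + z * l 1%nat).
  { unfold e_mu. rewrite <- (is_series_unique _ _ (is_series_parity _ _ _ _ (Hl 0%nat) (Hl 1%nat))).
    apply Series_ext. intros k. unfold emu_coef. rewrite Rpow_mult_distr.
    pose proof (gamma_mu_pos mu k Hmu). field. lra. }
  rewrite He, Rmult_plus_distr_l, <- Rmult_assoc, (Rmult_comm _ z), Rmult_assoc.
  apply is_series_parity; apply coef_parity_series; auto.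
Qed.

End GeneratingFunction.

(** * Moments of [T_n] *)

Definition weight (alpha mu nn x : R) (k : nat) : R := coef alpha mu nn k * x ^ k.

Section Moments.
Variables alpha mu nn x : R.
Hypotheses (Halpha : 0 <= alpha) (Hmu : 0 <= mu) (Hnn : 0 <= nn).

Let u := weight alpha mu nn x.
Let W := exp (alpha * x ^ 2) * e_mu mu (nn * x).
Let Wm := exp (alpha * x ^ 2) * e_mu mu (- (nn * x)).

Lemma weight_rec k :
  node mu k * u k = nn * x * shift u k + 2 * alpha * x ^ 2 * shift (shift u) k.
Proof.
  unfold u, weight. destruct k as [|[|k]]; simpl shift.
  - rewrite node_0. ring.
  - transitivity (node mu 1 * coef alpha mu nn 1 * x); [simpl; ring|].
    rewrite coef_rec_1 by exact Hmu. simpl; ring.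
  - transitivity (node mu (S (S k)) * coef alpha mu nn (S (S k)) * x ^ S (S k)); [ring|].
    rewrite coef_rec by exact Hmu. simpl; ring.
Qed.

Lemma weight_rec2 k :
  node mu k * (node mu k * u k) =
  nn * x * (shift (fun j => node mu j * u j) k + shift u k
            + 2 * mu * shift (fun j => (-1) ^ j * u j) k)
  + 2 * alpha * x ^ 2 * (shift (shift (fun j => node mu j * u j)) k + 2 * shift (shift u) k).
Proof.
  rewrite weight_rec. destruct k as [|[|k]]; simpl shift.
  - rewrite node_0. ring.
  - rewrite node_S, node_0. simpl. ring.
  - transitivity (nn * x * (node mu (S (S k)) * u (S k))
                  + 2 * alpha * x ^ 2 * (node mu (S (S k)) * u k)); [ring|].
    rewrite node_S at 1. rewrite node_SS. simpl pow. ring.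
Qed.

Lemma weight_series : is_series u W.
Proof. exact (coef_series alpha mu nn Hmu Hnn Halpha x). Qed.

Lemma weight_alt_series : is_series (fun k => (-1) ^ k * u k) Wm.
Proof.
  apply (is_series_eq _ _ _ _ (coef_series alpha mu nn Hmu Hnn Halpha (- x))).
  - intros k. unfold u, weight. replace (- x) with (-1 * x) by ring. rewrite Rpow_mult_distr. ring.
  - unfold Wm. do 3 f_equal; ring.
Qed.

Lemma node_weight_series :
  is_series (fun k => node mu k * u k) ((nn * x + 2 * alpha * x ^ 2) * W).
Proof.
  apply (is_series_eq _ _ _ _ (is_series_plus_R _ _ _ _
    (is_series_scal_R (nn * x) _ _ (is_series_shift _ _ weight_series))
    (is_series_scal_R (2 * alpha * x ^ 2) _ _
       (is_series_shift _ _ (is_series_shift _ _ weight_series))))).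
  - intros k. now rewrite weight_rec.
  - ring.
Qed.

Lemma node2_weight_series :
  is_series (fun k => node mu k * (node mu k * u k))
    (nn * x * ((nn * x + 2 * alpha * x ^ 2) * W + W + 2 * mu * Wm)
     + 2 * alpha * x ^ 2 * ((nn * x + 2 * alpha * x ^ 2) * W + 2 * W)).
Proof.
  pose proof (is_series_shift _ _ node_weight_series) as Hv.
  pose proof (is_series_shift _ _ weight_series) as Hu.
  pose proof (is_series_shift _ _ weight_alt_series) as Hw.
  refine (is_series_eq _ _ _ _ _ (fun k => eq_sym (weight_rec2 k)) eq_refl).
  apply is_series_plus_R; apply is_series_scal_R.
  - apply is_series_plus_R; [apply is_series_plus_R; [exact Hv | exact Hu] |].
    now apply is_series_scal_R.
  - apply is_series_plus_R; [now apply is_series_shift |].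
    now apply is_series_scal_R, is_series_shift.
Qed.

Lemma weight_nonneg k : 0 <= x -> 0 <= u k.
Proof. intros Hx. apply Rmult_le_pos; [now apply coef_nonneg | now apply pow_le]. Qed.

Lemma weight_sum_ge_1 : 0 <= x -> 1 <= W.
Proof.
  intros Hx. pose proof (is_series_term_le _ _ weight_series (fun k => weight_nonneg k Hx) 0) as H0.
  unfold u, weight in H0. rewrite coef_0 in H0 by exact Hmu. simpl in H0. lra.
Qed.

Hypothesis Hnn_pos : 0 < nn.

Lemma first_central_moment :
  is_series (fun k => u k * (node mu k / nn - x)) (2 * alpha * x ^ 2 / nn * W).
Proof.
  apply (is_series_eq _ _ _ _ (is_series_plus_R _ _ _ _
    (is_series_scal_R (/ nn) _ _ node_weight_series) (is_series_scal_R (- x) _ _ weight_series))).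
  - intros k. field. lra.
  - field. lra.
Qed.

Lemma second_central_moment :
  is_series (fun k => u k * (node mu k / nn - x) ^ 2)
    ((x / nn + 4 * alpha ^ 2 * x ^ 4 / nn ^ 2 + 4 * alpha * x ^ 2 / nn ^ 2) * W
     + 2 * mu * x / nn * Wm).
Proof.
  apply (is_series_eq _ _ _ _ (is_series_plus_R _ _ _ _ (is_series_plus_R _ _ _ _
    (is_series_scal_R (/ nn ^ 2) _ _ node2_weight_series)
    (is_series_scal_R (-2 * x / nn) _ _ node_weight_series))
    (is_series_scal_R (x ^ 2) _ _ weight_series))).
  - intros k. field. lra.
  - field. lra.
Qed.

End Moments.

(** * Second differences *)

Definition diff2 (g : R -> R) (t s : R) : R := g (t + 2 * s) - 2 * g (t + s) + g t.

Lemma seq_taylor_bound (P : nat -> R) w :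
  (forall i, Rabs (P (S (S i)) - 2 * P (S i) + P i) <= w) ->
  forall m,
  Rabs ((P (S m) - P m) - (P 1%nat - P 0%nat)) <= INR m * w /\
  Rabs (P m - P 0%nat - INR m * (P 1%nat - P 0%nat)) <= INR m ^ 2 * w.
Proof.
  intros H m. induction m as [|m [IH1 IH2]].
  - simpl. rewrite !Rmult_0_l, Rminus_diag, Rminus_diag, Rminus_0_r, Rabs_R0. lra.
  - specialize (H m). pose proof (pos_INR m). rewrite S_INR. split.
    + replace (P (S (S m)) - P (S m) - (P 1%nat - P 0%nat)) with
        ((P (S (S m)) - 2 * P (S m) + P m) + ((P (S m) - P m) - (P 1%nat - P 0%nat))) by ring.
      eapply Rle_trans; [apply Rabs_triang | lra].
    + replace (P (S m) - P 0%nat - (INR m + 1) * (P 1%nat - P 0%nat)) with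
        ((P m - P 0%nat - INR m * (P 1%nat - P 0%nat))
         + ((P (S m) - P m) - (P 1%nat - P 0%nat))) by ring.
      assert (0 <= w) by (eapply Rle_trans; [apply Rabs_pos | exact H]).
      eapply Rle_trans; [apply Rabs_triang | nra].
Qed.

(* A maximum principle: at an interior maximum [y1] of [phi], the symmetric second
   difference reaching the nearer endpoint is at most [- phi y1]. *)
Lemma max_principle (phi : R -> R) a h w : 0 < h -> 0 <= w ->
  (forall c, a <= c <= a + h -> continuity_pt phi c) ->
  phi a = 0 -> phi (a + h) = 0 ->
  (forall z r, a <= z -> 0 < r -> z + 2 * r <= a + h -> - w <= diff2 phi z r) ->
  forall y, a <= y <= a + h -> phi y <= w.
Proof.
  intros Hh Hw Hc Ha Hah Hd y Hy.
  destruct (continuity_ab_maj phi a (a + h) ltac:(lra) Hc) as [y1 [Hmax Hy1]].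
  apply Rle_trans with (phi y1); [apply Hmax; lra|].
  destruct (Rle_dec (y1 - a) (a + h - y1)) as [Hle | Hgt].
  - destruct (Req_dec y1 a) as [-> | Hne]; [lra|].
    specialize (Hd a (y1 - a) ltac:(lra) ltac:(lra) ltac:(lra)). unfold diff2 in Hd.
    replace (a + (y1 - a)) with y1 in Hd by ring.
    assert (phi (a + 2 * (y1 - a)) <= phi y1) by (apply Hmax; lra). lra.
  - destruct (Req_dec y1 (a + h)) as [-> | Hne]; [lra|].
    specialize (Hd (2 * y1 - a - h) (a + h - y1) ltac:(lra) ltac:(lra) ltac:(lra)).
    unfold diff2 in Hd.
    replace (2 * y1 - a - h + 2 * (a + h - y1)) with (a + h) in Hd by ring.
    replace (2 * y1 - a - h + (a + h - y1)) with y1 in Hd by ring.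
    assert (phi (2 * y1 - a - h) <= phi y1) by (apply Hmax; lra). lra.
Qed.

Lemma CB_continuity_pt_clamp (g : R -> R) : CB g -> forall c, continuity_pt (fun y => g (Rmax 0 y)) c.
Proof.
  intros [_ Hu] c eps Heps. destruct (Hu eps Heps) as [d [Hd H]]. exists d. split; [exact Hd|].
  intros y [_ Hy]. simpl in *. unfold R_dist in *. apply H; try apply Rmax_l.
  eapply Rle_lt_trans; [|exact Hy]. unfold Rmax.
  destruct (Rle_dec 0 y), (Rle_dec 0 c); unfold Rabs; repeat destruct Rcase_abs; lra.
Qed.

Lemma nfloor_mul q h : 0 <= q -> 0 < h -> exists m : nat, INR m * h <= q < INR m * h + h.
Proof.
  intros Hq Hh. destruct (nfloor_ex (q / h)) as [m [Hm1 Hm2]]; [apply Rdiv_le_0_compat; lra|].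
  exists m. apply (Rmult_le_compat_r h) in Hm1; [|lra]. apply (Rmult_lt_compat_r h) in Hm2; [|lra].
  unfold Rdiv in *. rewrite Rmult_assoc, Rinv_l, Rmult_1_r in Hm1, Hm2 by lra. lra.
Qed.

Definition slope (g : R -> R) (x h : R) : R := (g (x + h) - g x) / h.

Section SecondDifferences.
Variables (g : R -> R) (delta w : R).
Hypotheses (Hg : CB g) (Hdelta : 0 < delta)
  (Hw : forall t s, 0 <= t -> 0 < s -> s <= delta -> Rabs (diff2 g t s) <= w).

Lemma diff2_bound_nonneg : 0 <= w.
Proof. eapply Rle_trans; [apply Rabs_pos | apply (Hw 0 delta); lra]. Qed.

Lemma grid_bound y s : 0 <= y -> 0 < s -> s <= delta -> forall m,
  Rabs ((g (y + INR m * s + s) - g (y + INR m * s)) - (g (y + s) - g y)) <= INR m * w /\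
  Rabs (g (y + INR m * s) - g y - INR m * (g (y + s) - g y)) <= INR m ^ 2 * w.
Proof.
  intros Hy Hs Hsd m. set (P i := g (y + INR i * s)).
  assert (E0 : P 0%nat = g y) by (unfold P; simpl; f_equal; ring).
  assert (E1 : P 1%nat = g (y + s)) by (unfold P; simpl; f_equal; ring).
  assert (ES : P (S m) = g (y + INR m * s + s)) by (unfold P; rewrite S_INR; f_equal; ring).
  rewrite <- E0, <- E1, <- ES. apply seq_taylor_bound. intros i.
  unfold P. rewrite !S_INR. pose proof (pos_INR i).
  replace (y + (INR i + 1 + 1) * s) with (y + INR i * s + 2 * s) by ring.
  replace (y + (INR i + 1) * s) with (y + INR i * s + s) by ring.
  apply Hw; nra.
Qed.

Lemma cell_bound a h : 0 <= a -> 0 < h -> h <= delta ->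
  forall y, a <= y <= a + h -> Rabs (g y - g a - (y - a) / h * (g (a + h) - g a)) <= w.
Proof.
  intros Ha Hh Hhd y Hy. pose proof diff2_bound_nonneg.
  set (G y := g (Rmax 0 y)).
  assert (HG : forall y, 0 <= y -> G y = g y) by (intros; unfold G; now rewrite Rmax_right).
  set (phi y := G y - G a - (y - a) / h * (G (a + h) - G a)).
  assert (Hphi : forall c, continuity_pt phi c).
  { intros c. apply continuity_pt_minus; [apply continuity_pt_minus|].
    - now apply CB_continuity_pt_clamp.
    - apply continuity_pt_const. now intros ? ?.
    - reg. }
  assert (Hd2 : forall z r, a <= z -> 0 < r -> z + 2 * r <= a + h -> Rabs (diff2 phi z r) <= w).
  { intros z r Hz Hr Hzr. replace (diff2 phi z r) with (diff2 g z r); [apply Hw; lra|].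
    unfold diff2, phi. rewrite !HG by lra. field. lra. }
  replace (g y - g a - (y - a) / h * (g (a + h) - g a)) with (phi y)
    by (unfold phi; now rewrite !HG by lra).
  apply Rabs_le. split.
  - enough (- phi y <= w) by lra.
    apply (max_principle (fun y => - phi y) a h w); auto.
    + intros c _. now apply continuity_pt_opp.
    + unfold phi. field. lra.
    + unfold phi. field. lra.
    + intros z r Hz Hr Hzr. specialize (Hd2 z r Hz Hr Hzr). unfold diff2 in *.
      apply Rabs_le_between in Hd2. lra.
  - apply (max_principle phi a h w); auto.
    + unfold phi. field. lra.
    + unfold phi. field. lra.
    + intros z r Hz Hr Hzr. specialize (Hd2 z r Hz Hr Hzr). apply Rabs_le_between in Hd2. lra.
Qed.

Variable x : R.
Hypothesis Hx : 0 <= x.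

Lemma taylor_bound_right t : x <= t ->
  Rabs (g t - g x - (t - x) * slope g x delta) <= 2 * (1 + (t - x) ^ 2 / delta ^ 2) * w.
Proof.
  intros Ht. pose proof diff2_bound_nonneg.
  destruct (nfloor_mul (t - x) delta ltac:(lra) Hdelta) as [m [Hm1 Hm2]]. pose proof (pos_INR m).
  set (y := x + INR m * delta).
  destruct (grid_bound x delta Hx Hdelta (Rle_refl _) m) as [Hslope Hgrid]. fold y in Hslope, Hgrid.
  assert (Hty : y <= t <= y + delta) by (unfold y; lra).
  set (lam := (t - y) / delta).
  assert (Hlam : 0 <= lam <= 1).
  { unfold lam. split; [apply Rdiv_le_0_compat; lra|]. apply (Rdiv_le_1 _ _ Hdelta); lra. }
  pose proof (cell_bound y delta ltac:(unfold y; nra) Hdelta (Rle_refl _) t Hty) as Hcell.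
  fold lam in Hcell.
  replace (g t - g x - (t - x) * slope g x delta) with
    ((g t - g y - lam * (g (y + delta) - g y)) + (g y - g x - INR m * (g (x + delta) - g x))
     + lam * ((g (y + delta) - g y) - (g (x + delta) - g x)))
    by (unfold lam, y, slope; field; lra).
  assert (Hm3 : INR m ^ 2 <= (t - x) ^ 2 / delta ^ 2).
  { replace ((t - x) ^ 2 / delta ^ 2) with (((t - x) / delta) ^ 2) by (field; lra).
    apply pow_incr. split; [lra|]. apply Rle_div_r; lra. }
  eapply Rle_trans; [apply Rabs_triang|].
  rewrite Rabs_mult, (Rabs_pos_eq lam) by lra.
  pose proof (Rabs_triang (g t - g y - lam * (g (y + delta) - g y))
                          (g y - g x - INR m * (g (x + delta) - g x))).
  assert (lam * Rabs (g (y + delta) - g y - (g (x + delta) - g x)) <= INR m * w).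
  { apply Rle_trans with (1 * Rabs (g (y + delta) - g y - (g (x + delta) - g x))); [|lra].
    apply Rmult_le_compat_r; [apply Rabs_pos | lra]. }
  assert (INR m * w <= (1 + INR m ^ 2) * w) by (apply Rmult_le_compat_r; nra).
  assert (INR m ^ 2 * w <= (t - x) ^ 2 / delta ^ 2 * w) by (apply Rmult_le_compat_r; lra).
  lra.
Qed.

(* For [t < x], run a grid of step [s <= delta] from [t] through [x] up to the
   mirror point [x + (x - t)], and compare with [taylor_bound_right] there. *)
Lemma taylor_bound_left t : 0 <= t -> t < x ->
  Rabs (g t - g x - (t - x) * slope g x delta) <= 14 * (1 + (t - x) ^ 2 / delta ^ 2) * w.
Proof.
  intros Ht0 Ht. pose proof diff2_bound_nonneg. set (L := x - t).
  destruct (nfloor_mul L delta ltac:(unfold L; lra) Hdelta) as [m0 [Hm1 Hm2]].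
  set (m := S m0). assert (HmR : INR m = INR m0 + 1) by apply S_INR. pose proof (pos_INR m0).
  set (s := L / INR m).
  assert (Hs : 0 < s) by (unfold s, L; apply Rdiv_lt_0_compat; lra).
  assert (Hsd : s <= delta) by (unfold s; apply Rle_div_l; rewrite HmR; lra).
  destruct (grid_bound t s Ht0 Hs Hsd m) as [_ Hx_grid].
  destruct (grid_bound t s Ht0 Hs Hsd (m + m)) as [_ Hmirror].
  replace (t + INR m * s) with x in Hx_grid by (unfold s, L; field; lra).
  rewrite plus_INR in Hmirror.
  replace (t + (INR m + INR m) * s) with (x + L) in Hmirror by (unfold s, L; field; lra).
  pose proof (taylor_bound_right (x + L) ltac:(unfold L; lra)) as Hright.
  replace (x + L - x) with L in Hright by ring.
  set (A := g (x + L) - g t - (INR m + INR m) * (g (t + s) - g t)) in Hmirror.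
  set (B := g x - g t - INR m * (g (t + s) - g t)) in Hx_grid.
  set (C := g (x + L) - g x - L * slope g x delta) in Hright.
  replace (g t - g x - (t - x) * slope g x delta) with (A - 2 * B - C) by (unfold A, B, C, L; ring).
  replace ((t - x) ^ 2) with (L ^ 2) by (unfold L; ring).
  assert (Htri : Rabs (A - 2 * B - C) <= Rabs A + 2 * Rabs B + Rabs C).
  { unfold Rminus. eapply Rle_trans; [apply Rabs_triang|]. rewrite Rabs_Ropp.
    eapply Rle_trans; [apply Rplus_le_compat_r, Rabs_triang|].
    rewrite Rabs_Ropp, Rabs_mult, (Rabs_pos_eq 2) by lra. lra. }
  assert (HL : 0 <= L ^ 2 / delta ^ 2)
    by (apply Rdiv_le_0_compat; [apply pow2_ge_0 | apply pow_lt; lra]).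
  assert (Hm3 : INR m ^ 2 <= 2 * (1 + L ^ 2 / delta ^ 2)).
  { assert (INR m <= L / delta + 1)
      by (apply (Rplus_le_reg_r (-1)); rewrite HmR; ring_simplify; apply Rle_div_r; lra).
    replace (L ^ 2 / delta ^ 2) with ((L / delta) ^ 2) by (field; lra).
    assert (0 <= L / delta) by (apply Rdiv_le_0_compat; unfold L; lra).
    assert (INR m ^ 2 <= (L / delta + 1) ^ 2) by (apply pow_incr; lra).
    pose proof (pow2_ge_0 (L / delta - 1)). nra. }
  assert (INR m ^ 2 * w <= 2 * (1 + L ^ 2 / delta ^ 2) * w) by (apply Rmult_le_compat_r; lra).
  replace ((INR m + INR m) ^ 2) with (4 * INR m ^ 2) in Hmirror by ring.
  lra.
Qed.

Lemma taylor_bound t : 0 <= t ->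
  Rabs (g t - g x - (t - x) * slope g x delta) <= 14 * (1 + (t - x) ^ 2 / delta ^ 2) * w.
Proof.
  intros Ht. pose proof diff2_bound_nonneg.
  destruct (Rlt_or_le t x) as [Hlt | Hle]; [now apply taylor_bound_left|].
  eapply Rle_trans; [now apply taylor_bound_right|].
  assert (0 <= (t - x) ^ 2 / delta ^ 2)
    by (apply Rdiv_le_0_compat; [apply pow2_ge_0 | apply pow_lt; lra]).
  apply Rmult_le_compat_r; lra.
Qed.

Lemma slope_bound Sg : delta < 1 -> (forall y, 0 <= y -> Rabs (g y) <= Sg) ->
  Rabs (slope g x delta) <= 2 * Sg + 2 * w / delta ^ 2.
Proof.
  intros Hd1 HS. pose proof diff2_bound_nonneg.
  destruct (nfloor_mul 1 delta ltac:(lra) Hdelta) as [m0 [Hm1 Hm2]].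
  set (m := S m0). assert (HmR : INR m = INR m0 + 1) by apply S_INR. pose proof (pos_INR m0).
  assert (Hmd : 1 < INR m * delta < 2) by (rewrite HmR; lra).
  destruct (grid_bound x delta Hx Hdelta (Rle_refl _) m) as [_ Hgrid].
  set (d := g (x + delta) - g x) in Hgrid.
  assert (Hmd0 : INR m * Rabs d <= 2 * Sg + INR m ^ 2 * w).
  { pose proof (HS _ Hx). pose proof (HS (x + INR m * delta) ltac:(nra)).
    replace (INR m * Rabs d) with (Rabs (INR m * d)) by (rewrite Rabs_mult, Rabs_pos_eq; lra).
    replace (INR m * d) with
      ((g (x + INR m * delta) - g x) - (g (x + INR m * delta) - g x - INR m * d)) by ring.
    assert (Rabs (g (x + INR m * delta) - g x) <= 2 * Sg).
    { unfold Rminus. eapply Rle_trans; [apply Rabs_triang|]. rewrite Rabs_Ropp. lra. }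
    eapply Rle_trans; [apply Rabs_triang|]. rewrite Rabs_Ropp. lra. }
  unfold slope. fold d. rewrite Rabs_div, (Rabs_pos_eq delta) by lra.
  apply Rle_div_l; [lra|].
  apply Rmult_le_reg_l with (INR m); [lra|].
  replace (INR m * ((2 * Sg + 2 * w / delta ^ 2) * delta))
    with (2 * Sg * (INR m * delta) + 2 * INR m * (w / delta)) by (field; lra).
  assert (HSg : 0 <= Sg) by (eapply Rle_trans; [apply Rabs_pos | apply (HS x Hx)]).
  assert (INR m ^ 2 * w <= 2 * INR m * (w / delta)).
  { replace (INR m ^ 2 * w) with (INR m * (INR m * delta) * (w / delta)) by (field; lra).
    assert (0 <= w / delta) by (apply Rdiv_le_0_compat; lra).
    apply Rmult_le_compat_r; nra. }
  nra.
Qed.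

End SecondDifferences.

(** * Positive averages *)

(* An empty set has [Lub_Rbar] equal to [m_infty], whose [real] part is [0]. *)
Lemma real_Lub_Rbar_nonneg (E : R -> Prop) B :
  (forall y, E y -> 0 <= y <= B) ->
  (forall y, E y -> y <= real (Lub_Rbar E)) /\ 0 <= real (Lub_Rbar E).
Proof.
  intros HE. destruct (Lub_Rbar_correct E) as [Hub Hlub].
  destruct (Lub_Rbar E) as [r | | ]; simpl.
  - split; [exact Hub|].
    destruct (classic (exists y, E y)) as [[y Ey] | Hne].
    + specialize (Hub y Ey). specialize (HE y Ey). simpl in Hub. lra.
    + exfalso. apply (Hlub m_infty). intros y Ey. exfalso. eauto.
  - exfalso. apply (Hlub B). intros y Ey. simpl. now apply HE.
  - split; [|lra]. intros y Ey. destruct (Hub y Ey).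
Qed.

Lemma supnorm_ub g : CB g -> forall y, 0 <= y -> Rabs (g y) <= supnorm g.
Proof.
  intros [[B HB] _] y Hy. unfold supnorm.
  apply (real_Lub_Rbar_nonneg _ B); [|eauto].
  intros z [x [Hx ->]]. split; [apply Rabs_pos | now apply HB].
Qed.

Lemma omega2_ub g delta : CB g ->
  (forall t s, 0 <= t -> 0 < s -> s <= delta -> Rabs (diff2 g t s) <= omega2 g delta) /\
  0 <= omega2 g delta.
Proof.
  intros [[B HB] _]. unfold omega2.
  destruct (real_Lub_Rbar_nonneg (fun y => exists s t, 0 < s /\ s <= delta /\ 0 <= t /\
          y = Rabs (g (t + 2 * s) - 2 * g (t + s) + g t)) (4 * B)) as [H1 H2].
  - intros y [s [t [Hs [Hsd [Ht ->]]]]]. split; [apply Rabs_pos|].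
    pose proof (HB (t + 2 * s) ltac:(lra)). pose proof (HB (t + s) ltac:(lra)).
    pose proof (HB t Ht).
    unfold Rminus. eapply Rle_trans; [apply Rabs_triang|].
    eapply Rle_trans; [apply Rplus_le_compat_r, Rabs_triang|].
    rewrite Rabs_Ropp, Rabs_mult, (Rabs_pos_eq 2) by lra. lra.
  - split; [|exact H2]. intros t s Ht Hs Hsd. apply H1. exists s, t. unfold diff2. auto.
Qed.

Section PositiveAverages.
Variables (g : R -> R) (u t : nat -> R) (x W beta Delta : R).
Hypotheses (Hg : CB g) (Hx : 0 <= x) (HW : 0 < W) (Hbeta : 0 <= beta)
  (Hu : forall k, 0 <= u k) (Ht : forall k, 0 <= t k)
  (Hu0 : is_series u W)
  (Hu1 : is_series (fun k => u k * (t k - x)) (beta * W))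
  (Hu2 : is_series (fun k => u k * (t k - x) ^ 2) (Delta * W)).

Let L := Series (fun k => u k * g (t k)).

Lemma Rabs_weighted k (y : R) : Rabs (u k * y) = u k * Rabs y.
Proof. now rewrite Rabs_mult, (Rabs_pos_eq (u k)) by apply Hu. Qed.

Lemma deviation_series : is_series (fun k => u k * (g (t k) - g x)) (L - g x * W).
Proof.
  assert (HL : is_series (fun k => u k * g (t k)) L).
  { apply Series_correct, ex_series_Rabs.
    apply (@ex_series_le R_AbsRing R_CompleteNormedModule _ (fun k => supnorm g * u k)).
    - intros k. change (Rabs (Rabs (u k * g (t k))) <= supnorm g * u k).
      rewrite Rabs_Rabsolu, Rabs_weighted, Rmult_comm.
      apply Rmult_le_compat_r; [apply Hu | now apply supnorm_ub].
    - eexists. exact (is_series_scal_R _ _ _ Hu0). }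
  apply (is_series_eq _ _ _ _ (is_series_plus_R _ _ _ _ HL (is_series_scal_R (- g x) _ _ Hu0)));
    intros; ring.
Qed.

Lemma Delta_nonneg : 0 <= Delta.
Proof.
  enough (0 <= Delta * W) by nra.
  assert (Hterm : forall k, 0 <= u k * (t k - x) ^ 2)
    by (intros; apply Rmult_le_pos; [apply Hu | apply pow2_ge_0]).
  eapply Rle_trans; [apply (Hterm 0%nat) | exact (is_series_term_le _ _ Hu2 Hterm 0%nat)].
Qed.

Lemma deviation_crude : Rabs (L - g x * W) <= 2 * supnorm g * W.
Proof.
  apply (is_series_Rabs_le _ _ _ _ deviation_series (is_series_scal_R (2 * supnorm g) _ _ Hu0)).
  intros k. rewrite Rabs_weighted, Rmult_comm. apply Rmult_le_compat_r; [apply Hu|].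
  unfold Rminus. eapply Rle_trans; [apply Rabs_triang|]. rewrite Rabs_Ropp.
  pose proof (supnorm_ub g Hg (t k) (Ht k)). pose proof (supnorm_ub g Hg x Hx). lra.
Qed.

(* A vanishing second moment forces every node carrying weight to sit at [x]. *)
Lemma deviation_degenerate : Delta = 0 -> L - g x * W = 0.
Proof.
  intros HD.
  enough (Hz : is_series (fun k => u k * (g (t k) - g x)) 0)
    by (rewrite <- (is_series_unique _ _ deviation_series); exact (is_series_unique _ _ Hz)).
  apply (is_series_eq _ _ _ _ (is_series_scal_R 0 _ _ Hu0)); [intros k | ring].
  assert (Hk : u k * (t k - x) ^ 2 <= 0).
  { rewrite <- (Rmult_0_l W), <- HD.
    apply (is_series_term_le _ _ Hu2). intros j. apply Rmult_le_pos; [apply Hu | apply pow2_ge_0]. }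
  destruct (Req_dec (u k) 0) as [-> | Hne]; [ring|].
  assert (Hsq : (t k - x) ^ 2 = 0).
  { pose proof (Hu k). pose proof (pow2_ge_0 (t k - x)).
    enough ((t k - x) ^ 2 <= 0) by lra.
    apply (Rmult_le_reg_l (u k)); lra. }
  destruct (Req_dec (t k) x) as [-> | Hne']; [ring|].
  exfalso. apply (pow_nonzero (t k - x) 2); lra.
Qed.

(* Subtract the tangent-like line [g x + (s - x) * slope g x delta] at every node:
   the first moment handles the line, [taylor_bound] and the second moment the rest. *)
Lemma deviation_fine delta : 0 < delta < 1 -> beta <= 2 * delta ^ 2 -> Delta <= 2 * delta ^ 2 ->
  Rabs (L - g x * W) <= (4 * delta ^ 2 * supnorm g + 46 * omega2 g delta) * W.
Proof.
  intros [Hd0 Hd1] Hbd HDd.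
  destruct (omega2_ub g delta Hg) as [Hw Hw0]. set (w := omega2 g delta) in *.
  set (D := slope g x delta).
  assert (Hd2 : 0 < delta ^ 2) by (apply pow_lt; lra).
  pose proof (Rle_trans _ _ _ (Rabs_pos (g x)) (supnorm_ub g Hg x Hx)) as HS0.
  pose proof (slope_bound g delta w Hd0 Hw x Hx (supnorm g) Hd1 (supnorm_ub g Hg)) as HD.
  assert (Hrem : Rabs (L - g x * W - D * (beta * W))
                 <= 14 * w * W + 14 * w / delta ^ 2 * (Delta * W)).
  { assert (Hs : is_series (fun k => u k * (g (t k) - g x - (t k - x) * D))
                            (L - g x * W - D * (beta * W))).
    { apply (is_series_eq _ _ _ _ (is_series_plus_R _ _ _ _ deviation_series
               (is_series_scal_R (- D) _ _ Hu1))); intros; ring. }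
    apply (is_series_Rabs_le _ _ _ _ Hs
      (is_series_plus_R _ _ _ _ (is_series_scal_R (14 * w) _ _ Hu0)
                                (is_series_scal_R (14 * w / delta ^ 2) _ _ Hu2))).
    intros k. rewrite Rabs_weighted.
    eapply Rle_trans.
    { apply Rmult_le_compat_l; [apply Hu|].
      exact (taylor_bound g delta w Hg Hd0 Hw x Hx (t k) (Ht k)). }
    right. field. lra. }
  assert (HrD : 14 * w / delta ^ 2 * (Delta * W) <= 28 * w * W).
  { replace (14 * w / delta ^ 2 * (Delta * W)) with (14 * w * W * (Delta / delta ^ 2))
      by (field; lra).
    replace (28 * w * W) with (14 * w * W * 2) by ring.
    apply Rmult_le_compat_l; [nra|]. apply Rle_div_l; lra. }
  assert (HDb : Rabs D * beta <= 4 * delta ^ 2 * supnorm g + 4 * w).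
  { eapply Rle_trans; [apply Rmult_le_compat_r; [exact Hbeta | exact HD]|].
    replace ((2 * supnorm g + 2 * w / delta ^ 2) * beta)
      with (2 * supnorm g * beta + 2 * w * (beta / delta ^ 2)) by (field; lra).
    assert (beta / delta ^ 2 <= 2) by (apply Rle_div_l; lra). nra. }
  replace (L - g x * W) with ((L - g x * W - D * (beta * W)) + D * (beta * W)) by ring.
  eapply Rle_trans; [apply Rabs_triang|].
  rewrite Rabs_mult, (Rabs_pos_eq (beta * W)) by nra.
  nra.
Qed.

Lemma average_estimate :
  Rabs (L / W - g x) <=
  2 * 30 * (Rmin 1 ((beta + Delta) / 2) * supnorm g + omega2 g (sqrt ((beta + Delta) / 2))).
Proof.
  pose proof Delta_nonneg. set (chi := (beta + Delta) / 2).
  set (delta := sqrt chi). destruct (omega2_ub g delta Hg) as [_ Hw0].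
  pose proof (Rle_trans _ _ _ (Rabs_pos (g x)) (supnorm_ub g Hg x Hx)) as HS0.
  replace (L / W - g x) with ((L - g x * W) / W) by (field; lra).
  rewrite Rabs_div, (Rabs_pos_eq W) by lra. apply Rle_div_l; [lra|].
  destruct (Rle_or_lt 1 chi) as [Hbig | Hsmall].
  - rewrite Rmin_left by lra. pose proof deviation_crude. nra.
  - destruct (Req_dec chi 0) as [Hz | Hnz].
    + rewrite deviation_degenerate, Rabs_R0 by (unfold chi in Hz; lra).
      apply Rmult_le_pos; [|lra]. apply Rmult_le_pos; [lra|].
      apply Rplus_le_le_0_compat; [apply Rmult_le_pos; [apply Rmin_glb|]|]; lra.
    + rewrite Rmin_right by lra.
      assert (Hchi : 0 < chi).
      { destruct (Rle_lt_or_eq_dec 0 chi) as [? | ?]; [unfold chi; lra | assumption | congruence]. }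
      assert (Hdsq : delta ^ 2 = chi)
        by (unfold delta; rewrite <- Rsqr_pow2; apply Rsqr_sqrt; lra).
      assert (Hd : 0 < delta < 1).
      { unfold delta. split; [now apply sqrt_lt_R0|].
        rewrite <- sqrt_1. apply sqrt_lt_1; lra. }
      pose proof (deviation_fine delta Hd ltac:(unfold chi in Hdsq; lra)
                                     ltac:(unfold chi in Hdsq; lra)) as Hfine.
      rewrite Hdsq in Hfine.
      assert (0 <= chi * supnorm g * W) by (apply Rmult_le_pos; [apply Rmult_le_pos|]; lra).
      assert (0 <= omega2 g delta * W) by (apply Rmult_le_pos; lra).
      lra.
Qed.

End PositiveAverages.

Lemma T_op_average alpha mu n g x :
  T_op alpha mu n g x =
  Series (fun k => weight alpha mu (INR n) x k * g (node mu k / INR n))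
  / (exp (alpha * x ^ 2) * e_mu mu (INR n * x)).
Proof. unfold T_op. apply Rmult_comm. Qed.

Lemma T_op_second_moment alpha mu n x : 0 <= alpha -> 0 <= mu -> (0 < n)%nat -> 0 <= x ->
  is_series (fun k => weight alpha mu (INR n) x k * (node mu k / INR n - x) ^ 2)
    ((chi alpha mu n x - 2 * alpha * x ^ 2 / INR n) * (exp (alpha * x ^ 2) * e_mu mu (INR n * x))).
Proof.
  intros Ha Hm Hn Hx. pose proof (lt_0_INR n Hn) as Hnn.
  pose proof (weight_sum_ge_1 alpha mu (INR n) x Ha Hm ltac:(lra) Hx) as HW.
  pose proof (exp_pos (alpha * x ^ 2)).
  assert (e_mu mu (INR n * x) <> 0) by (intros He; rewrite He in HW; lra).
  apply (is_series_eq _ _ _ _ (second_central_moment alpha mu (INR n) x Ha Hm ltac:(lra) Hnn));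
    [reflexivity|].
  unfold chi. field. lra.
Qed.

Theorem theorem9 (alpha mu : R) (Halpha : 0 <= alpha) (Hmu : 0 <= mu) :
  exists M : R, 0 < M /\
    forall (g : R -> R), CB g ->
    forall (n : nat), (0 < n)%nat ->
    forall x : R, 0 <= x ->
      Rabs (T_op alpha mu n g x - g x) <=
      2 * M * (Rmin 1 (chi alpha mu n x / 2) * supnorm g
               + omega2 g (sqrt (chi alpha mu n x / 2))).
Proof.
  exists 30. split; [lra|]. intros g Hg n Hn x Hx.
  pose proof (lt_0_INR n Hn) as Hnn.
  set (beta := 2 * alpha * x ^ 2 / INR n).
  replace (chi alpha mu n x) with (beta + (chi alpha mu n x - beta)) by ring.
  rewrite T_op_average.
  apply average_estimate; auto.
  - pose proof (weight_sum_ge_1 alpha mu (INR n) x Halpha Hmu ltac:(lra) Hx). lra.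
  - unfold beta. apply Rdiv_le_0_compat; [|lra]. pose proof (pow2_ge_0 x). nra.
  - intros k. apply weight_nonneg; lra.
  - intros k. apply Rdiv_le_0_compat; [|lra].
    pose proof (pos_INR k). pose proof (INR_le_node mu k Hmu). lra.
  - apply weight_series; lra.
  - apply first_central_moment; lra.
  - now apply T_op_second_moment.
Qed.
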